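(* Let $f:[0,\infty)\to\mathbb{R}$ be convex with $f(1)=0$ and strictly convex at $x=1$, and let $G:[0,\mathsf{D_m}(f))\to[0,\infty)$ be continuous and non-decreasing with $G(0)=0$ and $G(x)>0$ for all $x>0$. Then $(G,f)$ is divergence-subadditive if and only if it is information-subadditive.
   Context: All alphabets are finite. For distributions $p\ll q$ on a finite set $\mathcal{X}$ and convex $f$ with $f(1)=0$, $D_f(p\|q)=\sum_x q(x) f(p(x)/q(x))$ with the convention $0f(0/0)=0$. $\mathsf{D_m}(f)=f(0)+\lim_{t\to\infty} f(t)/t$. Define $\mathcal{D}_{G,f}(p\|q)=G(D_f(p\|q))$ and, for random variables $X,Y$ on finite sets, $I_{G,f}(X;Y)=\min_{q_Y}\sum_x p_X(x)\,G(D_f(p_{Y|X=x}\|q_Y))$, the minimum over distributions $q_Y$ on the alphabet of $Y$. $(G,f)$ is divergence-subadditive if for all finite sets $\mathcal{Y},\mathcal{Z}$ and all distributions $q_Y\ll r_Y$ on $\mathcal{Y}$, $q_Z\ll r_Z$ on $\mathcal{Z}$: $\mathcal{D}_{G,f}(q_Yq_Z\|r_Yr_Z)\le \mathcal{D}_{G,f}(q_Y\|r_Y)+\mathcal{D}_{G,f}(q_Z\|r_Z)$. $(G,f)$ is information-subadditive if for all random variables $X,Y,Z$ on finite sets with $p_{XYZ}=p_Xp_{Y|X}p_{Z|X}$ (i.e. $Y\to X\to Z$ is a Markov chain), $I_{G,f}(X;YZ)\le I_{G,f}(X;Y)+I_{G,f}(X;Z)$. *)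

From HB Require Import structures.
From mathcomp Require Import all_boot all_order all_algebra.
From mathcomp Require Import all_classical all_reals all_analysis.
Set Implicit Arguments. Unset Strict Implicit. Unset Printing Implicit Defensive.
Import Order.TTheory GRing.Theory Num.Theory.
Import numFieldNormedType.Exports.
Local Open Scope classical_set_scope.
Local Open Scope ring_scope.

Section Defs.
Variable R : realType.

Definition convex_nonneg (f : R -> R) : Prop :=
  forall a b l : R, 0 <= a -> 0 <= b -> 0 <= l <= 1 ->
    f (l * a + (1 - l) * b) <= l * f a + (1 - l) * f b.

Definition strictly_convex_at1 (f : R -> R) : Prop :=
  forall a b l : R, 0 <= a -> 0 <= b -> 0 < l < 1 -> a != b ->
    l * a + (1 - l) * b = 1 ->
    f 1 < l * f a + (1 - l) * f b.

Definition Dm (f : R -> R) : \bar R :=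
  ((f 0)%:E + lim ((fun t : R => (f t / t)%:E) @ +oo%R))%E.

Definition Gdom (f : R -> R) : set R :=
  [set x : R | 0 <= x /\ (x%:E < Dm f)%E].

Definition is_dist (T : finType) (p : T -> R) : Prop :=
  (forall x, 0 <= p x) /\ \sum_(x : T) p x = 1.

Definition abscont (T : finType) (p q : T -> R) : Prop :=
  forall x, q x = 0 -> p x = 0.

(* f-divergence, with the convention 0 f(0/0) = 0 *)
Definition fdiv (f : R -> R) (T : finType) (p q : T -> R) : R :=
  \sum_(x : T) (if q x == 0 then 0 else q x * f (p x / q x)).

(* I_{G,f}(X;Y) for input law pX and conditional law W x = p_{Y|X=x};
   minimum (infimum) over output laws qY for which all the divergences
   D_f(p_{Y|X=x} || qY), x in the support of pX, are defined. *)
Definition Iinfo (G f : R -> R) (X Y : finType) (pX : X -> R) (W : X -> Y -> R) : R :=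
  inf [set v : R | exists qY : Y -> R,
         [/\ is_dist qY, (forall x, 0 < pX x -> abscont (W x) qY) &
             v = \sum_(x : X) pX x * G (fdiv f (W x) qY)]].

Definition divergence_subadditive (G f : R -> R) : Prop :=
  forall (Y Z : finType) (qY rY : Y -> R) (qZ rZ : Z -> R),
    is_dist qY -> is_dist rY -> is_dist qZ -> is_dist rZ ->
    abscont qY rY -> abscont qZ rZ ->
    G (fdiv f (fun yz : Y * Z => qY yz.1 * qZ yz.2)
              (fun yz : Y * Z => rY yz.1 * rZ yz.2))
      <= G (fdiv f qY rY) + G (fdiv f qZ rZ).

Definition margX (X Y Z : finType) (p : X * Y * Z -> R) (x : X) : R :=
  \sum_(y : Y) \sum_(z : Z) p (x, y, z).
Definition condY (X Y Z : finType) (p : X * Y * Z -> R) (x : X) (y : Y) : R :=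
  (\sum_(z : Z) p (x, y, z)) / margX p x.
Definition condZ (X Y Z : finType) (p : X * Y * Z -> R) (x : X) (z : Z) : R :=
  (\sum_(y : Y) p (x, y, z)) / margX p x.
Definition condYZ (X Y Z : finType) (p : X * Y * Z -> R) (x : X) (yz : Y * Z) : R :=
  p (x, yz.1, yz.2) / margX p x.

Definition information_subadditive (G f : R -> R) : Prop :=
  forall (X Y Z : finType) (p : X * Y * Z -> R),
    is_dist p ->
    (* Markov chain Y -> X -> Z : p_XYZ = p_X p_{Y|X} p_{Z|X} *)
    (forall x y z, p (x, y, z) = margX p x * condY p x y * condZ p x z) ->
    Iinfo G f (margX p) (condYZ p)
      <= Iinfo G f (margX p) (condY p) + Iinfo G f (margX p) (condZ p).

End Defs.

(* (=>) For a Markov chain Y - X - Z, any pair of output laws qY, qZ gives the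
   admissible output law qY qZ for (Y, Z), and divergence-subadditivity bounds
   every term of I(X; YZ) by the sum of the corresponding terms of I(X; Y) and
   I(X; Z).

   (<=) Suppose G(D(qY qZ || rY rZ)) > G(D(qY || rY)) + G(D(qZ || rZ)) = S and
   let X be a switch, equal to 1 with probability eps, selecting the channel
   outputs (qY, qZ) or (rY, rZ).  The output laws rY and rZ show that
   I(X; Y) + I(X; Z) <= eps S.  An output law s on Y * Z either is far from
   rY rZ, i.e. D(rY rZ || s) >= eta, which costs (1 - eps) G(eta), or is close
   to it, and then D(qY qZ || s) is almost D(qY qZ || rY rZ) because
   s |-> D(p || s) is lower semicontinuous at q with respect to D(q || s): a
   Pinsker-type inequality, which is where strict convexity at 1 enters, makes s
   close to q in L1, and the perspective s f(p/s) is Lipschitz from below.  For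
   S < c < G(D(qY qZ || rY rZ)) and eps = G(eta) / (G(eta) + c) this gives
   I(X; YZ) >= eps c > eps S, a contradiction.  Throughout, f-divergences stay
   strictly below D_m(f), inside the domain of G. *)

From HB Require Import structures.
From mathcomp Require Import all_boot all_order all_algebra.
From mathcomp Require Import all_classical all_reals all_analysis.
From mathcomp Require Import ring lra.
Import Order.TTheory GRing.Theory Num.Theory.
Import numFieldNormedType.Exports.
Local Open Scope classical_set_scope.
Local Open Scope ring_scope.
Set Implicit Arguments. Unset Strict Implicit. Unset Printing Implicit Defensive.

(* Since [x / 0 = 0], the convention [0 f(0/0) = 0] is automatic. *)
Lemma fdivE (R : realType) (f : R -> R) (T : finType) (p q : T -> R) :
  fdiv f p q = \sum_x q x * f (p x / q x).
Proof. by apply: eq_bigr => x _; case: eqP => // ->; rewrite mul0r. Qed.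

Lemma fdiv_self (R : realType) (f : R -> R) (T : finType) (q : T -> R) :
  f 1 = 0 -> fdiv f q q = 0.
Proof.
move=> f1; rewrite fdivE big1 // => x _.
by have [->|qx] := eqVneq (q x) 0; rewrite ?mul0r // divff // f1 mulr0.
Qed.

Section FdivLinear.
Variables (R : realType) (T : finType) (p q : T -> R).

Lemma fdivD (g h : R -> R) :
  fdiv (fun t => g t + h t) p q = fdiv g p q + fdiv h p q.
Proof. by rewrite !fdivE -big_split; apply: eq_bigr => x _; rewrite mulrDr. Qed.

Lemma fdivZ (c : R) (g : R -> R) : fdiv (fun t => c * g t) p q = c * fdiv g p q.
Proof. by rewrite !fdivE mulr_sumr; apply: eq_bigr => x _; rewrite mulrCA. Qed.

Hypothesis q_ge0 : forall x, 0 <= q x.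

Lemma ler_fdiv (g h : R -> R) :
  (forall x, q x != 0 -> g (p x / q x) <= h (p x / q x)) -> fdiv g p q <= fdiv h p q.
Proof.
move=> gh; rewrite !fdivE; apply: ler_sum => x _.
by have [->|qx] := eqVneq (q x) 0; rewrite ?mul0r // ler_wpM2l ?gh.
Qed.

Lemma ltr_fdiv (g h : R -> R) (x0 : T) :
  (forall x, q x != 0 -> g (p x / q x) <= h (p x / q x)) ->
  q x0 != 0 -> g (p x0 / q x0) < h (p x0 / q x0) -> fdiv g p q < fdiv h p q.
Proof.
move=> gh qx0 gh0; rewrite !fdivE (bigD1 x0) //= [X in _ < X](bigD1 x0) //=.
apply: ltr_leD; first by rewrite ltr_pM2l // lt0r qx0 q_ge0.
by apply: ler_sum => x _; have [->|qx] := eqVneq (q x) 0; rewrite ?mul0r // ler_wpM2l ?gh.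
Qed.

End FdivLinear.

Section FdivAffine.
Variables (R : realType) (T : finType) (p q : T -> R).
Hypotheses (p_dist : is_dist p) (q_dist : is_dist q) (pq : abscont p q).

Lemma fdiv_affine (a b : R) : fdiv (fun t => a + b * t) p q = a + b.
Proof.
rewrite fdivE (eq_bigr (fun x => a * q x + b * p x)) => [|x _].
  by rewrite big_split -!mulr_sumr p_dist.2 q_dist.2 !mulr1.
have [qx|qx] := eqVneq (q x) 0; last by field.
by rewrite qx (pq qx) !mulr0 mul0r addr0.
Qed.

Lemma fdiv_le_affine (g h : R -> R) (a b : R) :
  (forall t, 0 <= t -> g t <= h t + (a + b * t)) ->
  fdiv g p q <= fdiv h p q + (a + b).
Proof.
move=> gh; rewrite -(fdiv_affine a b) -fdivD; apply: (ler_fdiv (p := p) q_dist.1) => x _.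
by apply: gh; rewrite divr_ge0 ?p_dist.1 ?q_dist.1.
Qed.

Lemma fdiv_pos_part (c : R) :
  fdiv (fun t => Num.max (c * (t - 1)) 0) p q = \sum_x Num.max (c * (p x - q x)) 0.
Proof.
rewrite fdivE; apply: eq_bigr => x _; have [qx|qx] := eqVneq (q x) 0.
  by rewrite qx (pq qx) mul0r subrr mulr0 maxxx.
by rewrite maxr_pMr ?q_dist.1 // mulr0 mulrCA mulrBr mulr1 mulrCA divff // mulr1.
Qed.
End FdivAffine.

Section Subgradient.
Variables (R : realType) (f : R -> R).
Hypothesis f_convex : convex_nonneg f.

Lemma convex_chord (x y z : R) : 0 <= x -> x <= y -> y <= z -> x < z ->
  (z - x) * f y <= (z - y) * f x + (y - x) * f z.
Proof.
move=> x0 xy yz xz; have zx0 : 0 < z - x by rewrite subr_gt0.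
pose l := (z - y) / (z - x).
have l01 : 0 <= l <= 1.
  by rewrite /l divr_ge0 ?(ltW zx0) ?subr_ge0 //= ler_pdivrMr // mul1r; lra.
have := f_convex x0 (le_trans x0 (le_trans xy yz)) l01.
have -> : l * x + (1 - l) * z = y by rewrite /l; field; rewrite gt_eqF.
move=> /(ler_wpM2l (ltW zx0)).
suff -> : (z - x) * (l * f x + (1 - l) * f z) = (z - y) * f x + (y - x) * f z by [].
by rewrite /l; field; rewrite gt_eqF.
Qed.

Lemma slope0_nondecr (s t : R) : 0 < s -> s <= t -> (f s - f 0) / s <= (f t - f 0) / t.
Proof.
move=> s0 st; have t0 : 0 < t by exact: lt_le_trans st.
have := convex_chord (lexx 0) (ltW s0) st t0; rewrite !subr0 => H.
by rewrite ler_pdivrMr // mulrAC ler_pdivlMr //; lra.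
Qed.

(* For [t0 > 0] the supremum of the left difference quotients is a subgradient;
   [subgrad 0] is the junk value [sup set0]. *)
Definition subgrad (t0 : R) : R :=
  sup [set (f t0 - f u) / (t0 - u) | u in [set u | 0 <= u < t0]].

Lemma subgrad_le (t0 t : R) : 0 < t0 -> 0 <= t -> f t0 + subgrad t0 * (t - t0) <= f t.
Proof.
move=> t0_gt0 t_ge0.
pose S := [set (f t0 - f u) / (t0 - u) | u in [set u : R | 0 <= u < t0]].
have S0 : S ((f t0 - f 0) / (t0 - 0)) by exists 0 => //=; rewrite lexx.
have S_le v z : t0 < z -> S v -> v <= (f z - f t0) / (z - t0).
  move=> tz [u /andP[u0 ut] <-].
  have := convex_chord u0 (ltW ut) (ltW tz) (lt_trans ut tz) => H.
  by rewrite ler_pdivrMr ?subr_gt0 // mulrAC ler_pdivlMr ?subr_gt0 //; lra.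
have [tt|tt|->] := ltgtP t t0; last by rewrite subrr mulr0 addr0.
- have : (f t0 - f t) / (t0 - t) <= subgrad t0.
    apply: (ub_le_sup (E := S)); last by exists t => //=; rewrite t_ge0 tt.
    by exists ((f (t0 + 1) - f t0) / (t0 + 1 - t0)) => v /S_le; apply; rewrite ltrDl.
  by rewrite ler_pdivrMr ?subr_gt0 //; lra.
- have : subgrad t0 <= (f t - f t0) / (t - t0).
    by apply: ge_sup; [exists ((f t0 - f 0) / (t0 - 0)) | move=> v /S_le; apply].
  by rewrite ler_pdivlMr ?subr_gt0 //; lra.
Qed.

Hypothesis f1 : f 1 = 0.

Lemma subgrad1_le (t : R) : 0 <= t -> subgrad 1 * (t - 1) <= f t.
Proof. by move=> t0; have := subgrad_le ltr01 t0; rewrite f1 add0r. Qed.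

Lemma fdiv_ge0 (T : finType) (p q : T -> R) : is_dist p -> is_dist q ->
  abscont p q -> 0 <= fdiv f p q.
Proof.
move=> pd qd pq.
have := ler_fdiv (p := p) (g := fun t => - subgrad 1 + subgrad 1 * t) (h := f) qd.1.
rewrite fdiv_affine // addNr; apply=> x _.
by rewrite addrC -(mulrN1 (subgrad 1)) -mulrDr subgrad1_le // divr_ge0 ?pd.1 ?qd.1.
Qed.
End Subgradient.

Section ChordBounds.
Variables (R : realType) (f : R -> R).
Hypothesis f_convex : convex_nonneg f.

Definition chord0 (T t : R) : R := f 0 + (f T - f 0) / T * t.

Lemma chord0_le_Dm (T : R) : 0 < T -> ((chord0 T 1)%:E <= Dm f)%E.
Proof.
move=> T0; pose u t := ((f (Num.max t T) - f 0) / Num.max t T)%:E.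
have u_nd : nondecreasing_fun u.
  move=> x y xy; rewrite lee_fin; apply: slope0_nondecr => //.
    by rewrite lt_max T0 orbT.
  by rewrite ge_max !le_max xy lexx !orbT.
have f0_t : (fun t => (f 0 / t)%:E) @ +oo --> 0%:E.
  apply: cvg_EFin; first by near=> t.
  have inv0 : t^-1 @[t --> +oo] --> (0 : R).
    by apply/gtr0_cvgV0; [exact: nbhs_pinfty_gt | exact: cvg_id].
  by rewrite -[X in _ --> X](mulr0 (f 0)); apply: cvgMl_tmp.
have f_t : (fun t => (f t / t)%:E) @ +oo --> (ereal_sup (range u) + 0)%E.
  apply: cvg_trans
    (cvgeD (fin_num_adde_defl _ (fin_numE 0%:E)) (nondecreasing_cvge u_nd) f0_t).
  apply: near_eq_cvg; near=> t.
  have tT : T < t by near: t; apply: nbhs_pinfty_gt; rewrite num_real.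
  rewrite /u /= (max_idPl (ltW tT)) -EFinD; congr (_%:E).
  by field; rewrite gt_eqF // (lt_trans T0 tT).
rewrite /Dm (cvg_lim _ f_t) // adde0 /chord0 mulr1 EFinD leeD2l //.
by apply: ereal_sup_ubound; exists T => //; rewrite /u maxxx.
Unshelve. all: by end_near.
Qed.

Hypotheses (f1 : f 1 = 0) (f_strict : strictly_convex_at1 f).

Lemma chord0_gt0 (T : R) : 1 < T -> 0 < chord0 T 1.
Proof.
move=> T1; have T0 : 0 < T by exact: lt_trans T1.
have l01 : 0 < 1 - T^-1 < 1.
  by rewrite subr_gt0 invf_lt1 // T1 /= ltrBlDr ltrDl invr_gt0.
have : f 1 < (1 - T^-1) * f 0 + (1 - (1 - T^-1)) * f T.
  apply: (f_strict (lexx 0) (ltW T0) l01); first by rewrite eq_sym gt_eqF.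
  by field; rewrite gt_eqF.
suff -> : chord0 T 1 = (1 - T^-1) * f 0 + (1 - (1 - T^-1)) * f T by rewrite f1.
by rewrite /chord0; field; rewrite gt_eqF.
Qed.

Lemma f_lt_chord0 (T t : R) : 1 < T -> 0 < t -> t < T -> f t < chord0 T t.
Proof.
move=> T1 t0 tT; have T0 : 0 < T by exact: lt_trans T1.
have := chord0_gt0 T1; rewrite /chord0 mulr1; set k := (f T - f 0) / T => k1.
have fT : f T = f 0 + k * T by rewrite /k divfK ?gt_eqF // addrC subrK.
have [t1|t1] := leP t 1.
  have := convex_chord f_convex (lexx 0) (ltW t0) t1 ltr01.
  rewrite f1 !subr0 mulr0 addr0 mul1r => H.
  by have := mulr_gt0 t0 k1; nra.
have := convex_chord f_convex ler01 (ltW t1) (ltW tT) T1; rewrite f1 mulr0 add0r => H.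
have Tt : 0 < T - t by rewrite subr_gt0.
have T1' : 0 < T - 1 by rewrite subr_gt0.
have E : (T - 1) * (f 0 + k * t) = (t - 1) * f T + (T - t) * (f 0 + k).
  by rewrite fT; ring.
by rewrite -(ltr_pM2l T1') E; have := mulr_gt0 Tt k1; lra.
Qed.
End ChordBounds.

Section DivergenceDomain.
Variables (R : realType) (f : R -> R).
Hypotheses (f_convex : convex_nonneg f) (f1 : f 1 = 0) (f_strict : strictly_convex_at1 f).
Variables (T : finType) (p q : T -> R).
Hypotheses (p_dist : is_dist p) (q_dist : is_dist q) (pq : abscont p q).

Lemma fdiv_lt_Dm : ((fdiv f p q)%:E < Dm f)%E.
Proof.
have [p0 p1] := p_dist; have [q0 _] := q_dist.
have r_ge0 x : 0 <= p x / q x by rewrite divr_ge0.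
pose T0 := 2 + \sum_x p x / q x.
have r_lt x : p x / q x < T0.
  have : p x / q x <= \sum_x p x / q x by rewrite (bigD1 x) //= lerDl sumr_ge0.
  by rewrite /T0; lra.
have T1 : 1 < T0.
  have : 0 <= \sum_x p x / q x by apply: sumr_ge0.
  by rewrite /T0; lra.
have [x0 px0] : exists x, 0 < p x.
  have : \sum_x p x != 0 by rewrite p1 oner_neq0.
  by rewrite psumr_neq0 // => /hasP[x _ /= px]; exists x.
have qx0 : q x0 != 0 by apply/eqP => /pq; apply/eqP; rewrite gt_eqF.
apply: lt_le_trans (chord0_le_Dm f_convex (lt_trans ltr01 T1)).
rewrite lte_fin /chord0 mulr1 -(fdiv_affine p_dist q_dist pq).
apply: (ltr_fdiv q0 (x0 := x0)) => [x _|//|].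
  have [->|r0] := eqVneq (p x / q x) 0; first by rewrite mulr0 addr0.
  by apply/ltW/(f_lt_chord0 f_convex f1 f_strict T1); rewrite // lt0r r0 r_ge0.
by apply: (f_lt_chord0 f_convex f1 f_strict T1); rewrite // divr_gt0 // lt0r qx0 q0.
Qed.

Lemma fdiv_Gdom : Gdom f (fdiv f p q).
Proof. by split; [exact: fdiv_ge0 | exact: fdiv_lt_Dm]. Qed.
End DivergenceDomain.

Lemma maxr0_subN (R : realDomainType) (x : R) : Num.max x 0 - Num.max (- x) 0 = x.
Proof.
rewrite -[in Num.max (- x) 0]oppr0 -oppr_min opprK.
by case: ger0P => _; rewrite ?addr0 ?add0r.
Qed.

Lemma maxr0_addN (R : realDomainType) (x : R) : Num.max x 0 + Num.max (- x) 0 = `|x|.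
Proof.
rewrite -[in Num.max (- x) 0]oppr0 -oppr_min.
by case: ger0P => _; rewrite ?oppr0 ?addr0 ?add0r.
Qed.

Section Pinsker.
Variables (R : realType) (f : R -> R).
Hypotheses (f_convex : convex_nonneg f) (f1 : f 1 = 0).

Definition tangent_gap (t : R) : R := f t - subgrad f 1 * (t - 1).

Lemma tangent_gap_ge0 (t : R) : 0 <= t -> 0 <= tangent_gap t.
Proof. by move=> t0; rewrite subr_ge0 subgrad1_le. Qed.

Lemma tangent_gap_convex1 (t l : R) : 0 <= t -> 0 <= l <= 1 ->
  tangent_gap (l * t + (1 - l)) <= l * tangent_gap t.
Proof.
move=> t0 l01; have := f_convex t0 ler01 l01; rewrite mulr1 f1 mulr0 addr0 => H.
by rewrite /tangent_gap; lra.
Qed.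

(* The sign [c = 1] or [c = -1] selects the side of 1 on which [t] is measured. *)
Lemma tangent_gap_excess (c d t : R) : c ^+ 2 = 1 -> 0 < d <= 1 -> 0 <= t ->
  tangent_gap (1 + c * d) * (Num.max (c * (t - 1)) 0 - d) <= d * tangent_gap t.
Proof.
move=> c2 /andP[d0 d1] t0.
have cd0 : 0 <= 1 + c * d by nra.
have gt0 := tangent_gap_ge0 t0; have gd0 := tangent_gap_ge0 cd0.
have [ct|ct] := leP (c * (t - 1)) d.
  have neg : Num.max (c * (t - 1)) 0 - d <= 0 by rewrite subr_le0 ge_max ct ltW.
  by apply: le_trans (mulr_ge0_le0 gd0 neg) _; rewrite mulr_ge0 // ltW.
have ct0 : 0 < c * (t - 1) by exact: lt_trans ct.
rewrite (max_idPl (ltW ct0)).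
pose l := d / (c * (t - 1)).
have l01 : 0 <= l <= 1.
  by rewrite /l divr_ge0 ?(ltW d0) ?(ltW ct0) //= ler_pdivrMr // mul1r ltW.
have lc : l * (c * (t - 1)) = d by rewrite /l divfK ?gt_eqF.
have -> : 1 + c * d = l * t + (1 - l).
  by transitivity (1 + l * c ^+ 2 * (t - 1)); [rewrite -lc | rewrite c2]; ring.
have /andP[l0 _] := l01.
have ctd : 0 <= c * (t - 1) - d by rewrite subr_ge0 ltW.
have := ler_wpM2r ctd (tangent_gap_convex1 t0 l01).
have E : l * tangent_gap t * (c * (t - 1)) = d * tangent_gap t by rewrite -lc; ring.
by have := mulr_ge0 (mulr_ge0 l0 (ltW d0)) gt0; lra.
Qed.

Lemma fdiv_mass_excess (T : finType) (p q : T -> R) (c d : R) :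
  is_dist p -> is_dist q -> abscont p q -> c ^+ 2 = 1 -> 0 < d <= 1 ->
  tangent_gap (1 + c * d) * (\sum_x Num.max (c * (p x - q x)) 0 - d)
    <= d * fdiv f p q.
Proof.
move=> pd qd pq c2 d01; set k := tangent_gap (1 + c * d).
have := fdiv_le_affine pd qd pq (g := fun t => k * Num.max (c * (t - 1)) 0)
  (h := fun t => d * f t) (a := k * d + d * subgrad f 1) (b := - (d * subgrad f 1)).
rewrite !fdivZ fdiv_pos_part ?qd.1 // => H.
suff /H : forall t : R, 0 <= t -> k * Num.max (c * (t - 1)) 0 <=
    d * f t + (k * d + d * subgrad f 1 + - (d * subgrad f 1) * t) by lra.
by move=> t t0; have := tangent_gap_excess c2 d01 t0; rewrite -/k /tangent_gap; lra.
Qed.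

Hypothesis f_strict : strictly_convex_at1 f.

Lemma f_mid_gt0 (d : R) : 0 < d <= 1 -> 0 < f (1 - d) + f (1 + d).
Proof.
move=> /andP[d0 d1]; have l01 : 0 < (2 : R)^-1 < 1 by rewrite invr_gt0 invf_lt1 //; lra.
have : f 1 < 2^-1 * f (1 - d) + (1 - 2^-1) * f (1 + d).
  have ne : 1 - d != 1 + d by apply/negP => /eqP; lra.
  by apply: (f_strict _ _ l01 ne); [lra | lra | field].
by rewrite f1; lra.
Qed.

Lemma l1_lt_of_fdiv_lt (T : finType) (p q : T -> R) (d : R) :
  is_dist p -> is_dist q -> abscont p q -> 0 < d <= 1 ->
  fdiv f p q < (f (1 - d) + f (1 + d)) / 2 -> \sum_x `|p x - q x| < 4 * d.
Proof.
move=> pd qd pq d01 small; have /andP[d0 _] := d01.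
have := fdiv_mass_excess pd qd pq (expr1n _ 2) d01.
under eq_bigr do rewrite mul1r.
have := fdiv_mass_excess pd qd pq (etrans (sqrrN 1) (expr1n _ 2)) d01.
rewrite (eq_bigr (fun x => Num.max (- (p x - q x)) 0)) => [|x _]; last by rewrite mulN1r.
rewrite mulN1r mul1r.
set A := \sum_x Num.max (p x - q x) 0; set B := \sum_x Num.max (- (p x - q x)) 0.
have AB : A - B = 0.
  rewrite -sumrB (eq_bigr _ (fun x _ => maxr0_subN (p x - q x))) sumrB.
  by rewrite pd.2 qd.2 subrr.
have -> : \sum_x `|p x - q x| = A + B.
  by rewrite -big_split /=; apply: eq_bigr => x _; rewrite maxr0_addN.
have mid := f_mid_gt0 d01.
have gaps : tangent_gap (1 - d) + tangent_gap (1 + d) = f (1 - d) + f (1 + d).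
  by rewrite /tangent_gap; ring.
have {}small : 2 * d * fdiv f p q < d * (f (1 - d) + f (1 + d)).
  by rewrite [2 * d]mulrC -mulrA ltr_pM2l //; lra.
have BA : B = A by lra.
rewrite BA => Hm Hp.
have : (f (1 - d) + f (1 + d)) * (A - d) < (f (1 - d) + f (1 + d)) * d.
  by rewrite -gaps in small *; lra.
by rewrite ltr_pM2l //; lra.
Qed.

End Pinsker.

Section LowerSemicontinuity.
Variables (R : realType) (f : R -> R).
Hypothesis f_convex : convex_nonneg f.

Definition perspective_lip (p q : R) : R :=
  `|f (p / q) - subgrad f (p / q) * (p / q)|.

(* The tangent line of f at [p / q], transported to the perspective [s |-> s f(p / s)]. *)
Lemma perspective_lipschitz_lb (p q s : R) : 0 <= p -> 0 <= q -> 0 <= s ->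
  (q = 0 -> p = 0) -> (s = 0 -> p = 0) ->
  q * f (p / q) - perspective_lip p q * `|s - q| <= s * f (p / s).
Proof.
rewrite /perspective_lip => p0 q0 s0 qp sp.
have abs_lb (a b : R) : b * a - `|a| * `|b| <= 0.
  by rewrite -normrM mulrC subr_le0 ler_norm.
have [-> | pn0] := eqVneq p 0.
  rewrite !mul0r mulr0 subr0; have := abs_lb (f 0) (q - s).
  by rewrite [`|q - s|]distrC; lra.
have pp : 0 < p by rewrite lt0r pn0.
have q_gt0 : 0 < q by rewrite lt0r q0 (contra_neq qp pn0).
have s_gt0 : 0 < s by rewrite lt0r s0 (contra_neq sp pn0).
set t := p / q; set sg := subgrad f t.
have := subgrad_le f_convex (divr_gt0 pp q_gt0) (divr_ge0 p0 s0).
move=> /(ler_wpM2l (ltW s_gt0)).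
have -> : s * (f t + sg * (p / s - t)) = q * f t + (s - q) * (f t - sg * t).
  by rewrite /t; field; rewrite !gt_eqF.
by have := abs_lb (f t - sg * t) (q - s); rewrite [`|q - s|]distrC; lra.
Qed.

Lemma fdiv_lipschitz_lb (T : finType) (p q : T -> R) :
  (forall x, 0 <= p x) -> (forall x, 0 <= q x) -> abscont p q ->
  exists2 C, 0 <= C & forall s : T -> R, (forall x, 0 <= s x) -> abscont p s ->
    fdiv f p q - C * \sum_x `|s x - q x| <= fdiv f p s.
Proof.
move=> p0 q0 pq; pose C := \sum_x perspective_lip (p x) (q x).
have C_ge0 x : 0 <= perspective_lip (p x) (q x) by exact: normr_ge0.
exists C => [|s s0 ps]; first exact: sumr_ge0.
apply: le_trans (_ : fdiv f p q - \sum_x perspective_lip (p x) (q x) * `|s x - q x| <= _).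
  rewrite lerD2l lerN2 mulr_suml; apply: ler_sum => x _; rewrite ler_wpM2l //.
  by rewrite (bigD1 x) //= lerDl sumr_ge0.
rewrite !fdivE -sumrB; apply: ler_sum => x _.
by apply: perspective_lipschitz_lb; [| | | exact: pq | exact: ps].
Qed.

Hypotheses (f1 : f 1 = 0) (f_strict : strictly_convex_at1 f).

Lemma fdiv_lsc (T : finType) (p q : T -> R) (rho : R) :
  is_dist p -> is_dist q -> abscont p q -> 0 < rho ->
  exists2 eta, 0 < eta & forall s : T -> R, is_dist s -> abscont p s -> abscont q s ->
    fdiv f q s < eta -> fdiv f p q - rho < fdiv f p s.
Proof.
move=> pd qd pq rho0; have [C C0 HC] := fdiv_lipschitz_lb pd.1 qd.1 pq.
have C1 : 0 < 4 * (C + 1) by rewrite mulr_gt0 //; lra.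
pose d := Num.min 1 (rho / (4 * (C + 1))).
have d01 : 0 < d <= 1 by rewrite lt_min ltr01 divr_gt0 //= ge_min lexx.
have dC : d * (4 * (C + 1)) <= rho by rewrite -ler_pdivlMr // ge_min lexx orbT.
exists ((f (1 - d) + f (1 + d)) / 2) => [|s sd ps qs small].
  by rewrite divr_gt0 // f_mid_gt0.
have := l1_lt_of_fdiv_lt f_convex f1 f_strict qd sd qs d01 small.
under eq_bigr do rewrite distrC.
have : 0 <= \sum_x `|s x - q x| by apply: sumr_ge0.
have := HC s sd.1 ps; have /andP[d0 _] := d01; nra.
Qed.
End LowerSemicontinuity.


Section FiniteLaws.
Variable R : realType.

Lemma sum_pair (A B : finType) (F : A * B -> R) :
  \sum_(w : A * B) F w = \sum_a \sum_b F (a, b).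
Proof. by rewrite (pair_bigA _ (fun a b => F (a, b))); apply: eq_bigr => -[]. Qed.

Lemma sum_triple (A B C : finType) (F : A * B * C -> R) :
  \sum_w F w = \sum_a \sum_b \sum_c F (a, b, c).
Proof. by rewrite sum_pair (sum_pair (fun ab => \sum_c F (ab, c))). Qed.

Lemma is_dist_prod (A B : finType) (a : A -> R) (b : B -> R) :
  is_dist a -> is_dist b -> is_dist (fun w : A * B => a w.1 * b w.2).
Proof.
move=> [a0 a1] [b0 b1]; split => [w|]; first by rewrite mulr_ge0.
by rewrite sum_pair -a1; apply: eq_bigr => x _ /=; rewrite -mulr_sumr b1 mulr1.
Qed.

Lemma abscont_prod (A B : finType) (a a' : A -> R) (b b' : B -> R) :
  abscont a a' -> abscont b b' ->
  abscont (fun w : A * B => a w.1 * b w.2) (fun w => a' w.1 * b' w.2).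
Proof.
move=> ha hb w /eqP; rewrite mulf_eq0 => /orP[/eqP/ha -> | /eqP/hb ->];
  by rewrite ?mul0r ?mulr0.
Qed.

Lemma inf_le_add (E F : set R) (c : R) : E !=set0 -> F !=set0 ->
  (forall a b, E a -> F b -> c <= a + b) -> c <= inf E + inf F.
Proof.
move=> E0 F0 cEF.
have cE b : F b -> c - b <= inf E.
  by move=> Fb; apply: lb_le_inf => // a Ea; have := cEF a b Ea Fb; lra.
suff : c - inf E <= inf F by lra.
by apply: lb_le_inf => // b /cE; lra.
Qed.

Definition markov_law (X Y Z : finType) (pX : X -> R) (WY : X -> Y -> R)
  (WZ : X -> Z -> R) (w : X * Y * Z) : R := pX w.1.1 * WY w.1.1 w.1.2 * WZ w.1.1 w.2.

Section MarkovLaw.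
Variables (X Y Z : finType) (pX : X -> R) (WY : X -> Y -> R) (WZ : X -> Z -> R).
Hypotheses (pX_gt0 : forall x, 0 < pX x)
  (WY_dist : forall x, is_dist (WY x)) (WZ_dist : forall x, is_dist (WZ x)).
Let p := markov_law pX WY WZ.

Lemma margX_markov_law : margX p = pX.
Proof.
apply: funext => x; rewrite /margX /p /markov_law /=.
under eq_bigr do rewrite -mulr_sumr (WZ_dist x).2 mulr1.
by rewrite -mulr_sumr (WY_dist x).2 mulr1.
Qed.

Lemma condY_markov_law : condY p = WY.
Proof.
apply: funext => x; apply: funext => y; rewrite /condY margX_markov_law.
rewrite /p /markov_law /= -mulr_sumr (WZ_dist x).2 mulr1 mulrAC divff ?mul1r //.
exact: lt0r_neq0.
Qed.

Lemma condZ_markov_law : condZ p = WZ.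
Proof.
apply: funext => x; apply: funext => z; rewrite /condZ margX_markov_law.
rewrite /p /markov_law /= -mulr_suml -mulr_sumr (WY_dist x).2 mulr1.
by rewrite mulrAC divff ?mul1r //; exact: lt0r_neq0.
Qed.

Lemma condYZ_markov_law : condYZ p = fun x w => WY x w.1 * WZ x w.2.
Proof.
apply: funext => x; apply: funext => w; rewrite /condYZ margX_markov_law.
by rewrite /p /markov_law /=; field; exact: lt0r_neq0.
Qed.

Lemma is_dist_markov_law : is_dist pX -> is_dist p.
Proof.
move=> [_ pX1]; split => [w|].
  by rewrite /p /markov_law !mulr_ge0 ?(WY_dist _).1 ?(WZ_dist _).1 ?ltW.
by rewrite sum_triple -pX1 -margX_markov_law.
Qed.

Lemma markov_law_markov (x : X) (y : Y) (z : Z) :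
  p (x, y, z) = margX p x * condY p x y * condZ p x z.
Proof. by rewrite margX_markov_law condY_markov_law condZ_markov_law. Qed.
End MarkovLaw.

Section Conditionals.
Variables (X Y Z : finType) (p : X * Y * Z -> R).
Hypothesis p_dist : is_dist p.

Lemma is_dist_margX : is_dist (margX p).
Proof.
split=> [x|]; last by rewrite -p_dist.2 sum_triple.
by apply: sumr_ge0 => y _; apply: sumr_ge0 => z _; exact: p_dist.1.
Qed.

Lemma is_dist_condY (x : X) : 0 < margX p x -> is_dist (condY p x).
Proof.
move=> mx; split=> [y|].
  by apply: divr_ge0 _ (ltW mx); apply: sumr_ge0 => z _; exact: p_dist.1.
by rewrite -mulr_suml divff // gt_eqF.
Qed.

Lemma is_dist_condZ (x : X) : 0 < margX p x -> is_dist (condZ p x).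
Proof.
move=> mx; split=> [z|].
  by apply: divr_ge0 _ (ltW mx); apply: sumr_ge0 => y _; exact: p_dist.1.
by rewrite -mulr_suml exchange_big divff // gt_eqF.
Qed.

Lemma condYZ_markov (x : X) :
  (forall x y z, p (x, y, z) = margX p x * condY p x y * condZ p x z) ->
  0 < margX p x -> condYZ p x = fun w => condY p x w.1 * condZ p x w.2.
Proof.
move=> markov mx; apply: funext => -[y z]; rewrite /condYZ markov /=.
by field; rewrite gt_eqF.
Qed.
End Conditionals.

Definition bern (eps : R) (b : bool) : R := if b then eps else 1 - eps.

Lemma is_dist_bern (eps : R) : 0 < eps < 1 -> is_dist (bern eps).
Proof.
by move=> /andP[e0 e1]; split=> [[] /=|]; rewrite ?big_bool /=; lra.
Qed.

Lemma bern_gt0 (eps : R) : 0 < eps < 1 -> forall b, 0 < bern eps b.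
Proof. by move=> /andP[e0 e1] [] /=; lra. Qed.

Definition info_set (G f : R -> R) (X Y : finType) (pX : X -> R) (W : X -> Y -> R) :=
  [set v : R | exists qY : Y -> R,
         [/\ is_dist qY, (forall x, 0 < pX x -> abscont (W x) qY) &
             v = \sum_(x : X) pX x * G (fdiv f (W x) qY)]].

Lemma info_set_nonempty (G f : R -> R) (X Y : finType) (pX : X -> R) (W : X -> Y -> R) :
  is_dist pX -> (forall x, 0 < pX x -> is_dist (W x)) -> info_set G f pX W !=set0.
Proof.
move=> [pX0 pX1] Wd; pose qY y := \sum_x pX x * W x y.
have term_ge0 x y : 0 <= pX x * W x y.
  have [->|px] := eqVneq (pX x) 0; first by rewrite mul0r.
  by rewrite mulr_ge0 // (Wd x _).1 // lt0r px pX0.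
have qY_dist : is_dist qY.
  split=> [y|]; first exact: sumr_ge0.
  rewrite /qY exchange_big -pX1; apply: eq_bigr => x _ /=.
  have [->|px] := eqVneq (pX x) 0; first by rewrite big1 // => y _; rewrite mul0r.
  by rewrite -mulr_sumr (Wd x _).2 ?mulr1 // lt0r px pX0.
exists (\sum_x pX x * G (fdiv f (W x) qY)), qY; split=> // x px y /eqP.
rewrite psumr_eq0 // => /allP /(_ x (mem_index_enum _)) /=.
by rewrite mulf_eq0 gt_eqF // => /eqP.
Qed.

Lemma info_subadditive_switch (G f : R -> R) (Y Z : finType) (eps : R)
    (qY rY : Y -> R) (qZ rZ : Z -> R) :
  information_subadditive G f -> 0 < eps < 1 ->
  is_dist qY -> is_dist rY -> is_dist qZ -> is_dist rZ ->
  Iinfo G f (bern eps) (fun b => if b then fun w : Y * Z => qY w.1 * qZ w.2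
                                      else fun w => rY w.1 * rZ w.2)
    <= Iinfo G f (bern eps) (fun b => if b then qY else rY)
       + Iinfo G f (bern eps) (fun b => if b then qZ else rZ).
Proof.
move=> sub eps01 qYd rYd qZd rZd.
pose WY b := if b then qY else rY; pose WZ b := if b then qZ else rZ.
have bern_pos := bern_gt0 eps01.
have WYd b : is_dist (WY b) by case: b.
have WZd b : is_dist (WZ b) by case: b.
have := sub _ _ _ _ (is_dist_markov_law bern_pos WYd WZd (is_dist_bern eps01))
  (markov_law_markov bern_pos WYd WZd).
rewrite margX_markov_law // condY_markov_law // condZ_markov_law // condYZ_markov_law //.
by congr (_ <= _); congr Iinfo; apply: funext => -[].
Qed.
End FiniteLaws.

Section Subadditivity.
Variables (R : realType) (f G : R -> R).
Hypotheses (f_convex : convex_nonneg f) (f1 : f 1 = 0) (f_strict : strictly_convex_at1 f).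
Hypotheses (G_cont : {within Gdom f, continuous G})
  (G_nondecr : forall x y, Gdom f x -> Gdom f y -> x <= y -> G x <= G y)
  (G_ge0 : forall x, Gdom f x -> 0 <= G x) (G0 : G 0 = 0).

Lemma Iinfo_le_at (X Y : finType) (pX : X -> R) (W : X -> Y -> R) (qY : Y -> R) :
  (forall x, 0 <= pX x) -> (forall x, 0 < pX x -> is_dist (W x)) ->
  is_dist qY -> (forall x, 0 < pX x -> abscont (W x) qY) ->
  Iinfo G f pX W <= \sum_x pX x * G (fdiv f (W x) qY).
Proof.
move=> pX0 Wd qd Wq; apply: ge_inf; last by exists qY.
exists 0 => _ [s [sd Ws ->]]; apply: sumr_ge0 => x _.
have [->|px] := eqVneq (pX x) 0; first by rewrite mul0r.
have px_gt0 : 0 < pX x by rewrite lt0r px pX0.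
have D := fdiv_Gdom f_convex f1 f_strict (Wd _ px_gt0) sd (Ws _ px_gt0).
exact: mulr_ge0 (pX0 x) (G_ge0 D).
Qed.

Lemma Iinfo_ge (X Y : finType) (pX : X -> R) (W : X -> Y -> R) (c : R) :
  is_dist pX -> (forall x, 0 < pX x -> is_dist (W x)) ->
  (forall qY, is_dist qY -> (forall x, 0 < pX x -> abscont (W x) qY) ->
    c <= \sum_x pX x * G (fdiv f (W x) qY)) ->
  c <= Iinfo G f pX W.
Proof.
move=> pXd Wd lb; apply: lb_le_inf; first exact: (info_set_nonempty G f pXd Wd).
by move=> _ [qY [qd Wq ->]]; exact: lb.
Qed.

Lemma div_info : divergence_subadditive G f -> information_subadditive G f.
Proof.
move=> sub X Y Z p pd markov; have [m0 _] := is_dist_margX pd.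
have Yd x := is_dist_condY pd (x := x); have Zd x := is_dist_condZ pd (x := x).
have YZd x (mx : 0 < margX p x) : is_dist (condYZ p x).
  by rewrite (condYZ_markov markov mx); apply: is_dist_prod; [exact: Yd | exact: Zd].
apply: inf_le_add; [exact: info_set_nonempty (is_dist_margX pd) Yd |
                    exact: info_set_nonempty (is_dist_margX pd) Zd |].
move=> _ _ [qY [qYd Yq ->]] [qZ [qZd Zq ->]].
apply: le_trans (Iinfo_le_at (qY := fun w => qY w.1 * qZ w.2) m0 YZd _ _) _.
- exact: is_dist_prod.
- move=> x mx; rewrite (condYZ_markov markov mx).
  by apply: abscont_prod; [exact: Yq | exact: Zq].
rewrite -big_split; apply: ler_sum => x _ /=.
have [->|mx] := eqVneq (margX p x) 0; first by rewrite !mul0r addr0.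
have {}mx : 0 < margX p x by rewrite lt0r mx m0.
rewrite -mulrDr ler_wpM2l ?m0 // (condYZ_markov markov mx).
by apply: sub; [exact: Yd | | exact: Zd | | exact: Yq | exact: Zq].
Qed.

Lemma G_gt_near (x c : R) : Gdom f x -> c < G x ->
  exists2 rho, 0 < rho & forall y, Gdom f y -> x - rho < y -> c < G y.
Proof.
move=> Dx cx; have := (subspace_continuousP (Gdom f) G).1 G_cont x Dx.
move=> /cvgrPdist_lt /(_ (G x - c)); rewrite subr_gt0 => /(_ cx).
rewrite near_withinE => /nbhs_ballP [rho /= rho0 near_x].
exists rho => // y Dy xy; have [le_xy|lt_yx] := leP x y.
  exact: lt_le_trans cx (G_nondecr Dx Dy le_xy).
have /near_x /(_ Dy) : ball x rho y by rewrite /ball /= gtr0_norm ?subr_gt0 //; lra.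
by rewrite ltr_distlC => /andP[]; lra.
Qed.

Lemma G_fdiv_gt_near (T : finType) (p q : T -> R) (c : R) :
  is_dist p -> is_dist q -> abscont p q -> c < G (fdiv f p q) ->
  exists2 eta, 0 < eta & forall s : T -> R, is_dist s -> abscont p s -> abscont q s ->
    fdiv f q s < eta -> c < G (fdiv f p s).
Proof.
move=> pd qd pq cG.
have [rho rho0 Hrho] := G_gt_near (fdiv_Gdom f_convex f1 f_strict pd qd pq) cG.
have [eta eta0 Heta] := fdiv_lsc f_convex f1 f_strict pd qd pq rho0.
exists eta => // s sd ps qs small; apply: Hrho; last exact: Heta.
exact: fdiv_Gdom.
Qed.

Lemma Iinfo_bern_le (Y : finType) (eps : R) (q r : Y -> R) :
  0 < eps < 1 -> is_dist q -> is_dist r -> abscont q r ->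
  Iinfo G f (bern eps) (fun b => if b then q else r) <= eps * G (fdiv f q r).
Proof.
move=> eps01 qd rd qr; have [bern0 _] := is_dist_bern eps01.
apply: le_trans (Iinfo_le_at (qY := r) bern0 _ rd _) _; try by move=> [] _.
by rewrite big_bool /= fdiv_self // G0 mulr0 addr0.
Qed.

Lemma Iinfo_bern_ge (T : finType) (eps c eta : R) (P Q : T -> R) :
  0 < eps < 1 -> is_dist P -> is_dist Q -> Gdom f eta -> (1 - eps) * G eta = eps * c ->
  (forall s, is_dist s -> abscont P s -> abscont Q s -> fdiv f Q s < eta ->
    c <= G (fdiv f P s)) ->
  eps * c <= Iinfo G f (bern eps) (fun b => if b then P else Q).
Proof.
move=> eps01 Pd Qd Deta Geta near_Q; have /andP[eps0 eps1] := eps01.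
apply: Iinfo_ge (is_dist_bern eps01) _ _ => [[]//|s sd Ws].
have Ps := Ws true (bern_gt0 eps01 true); have Qs := Ws false (bern_gt0 eps01 false).
have DPs := fdiv_Gdom f_convex f1 f_strict Pd sd Ps.
have DQs := fdiv_Gdom f_convex f1 f_strict Qd sd Qs.
have GPs := mulr_ge0 (ltW eps0) (G_ge0 DPs).
have GQs : 0 <= (1 - eps) * G (fdiv f Q s) by rewrite mulr_ge0 ?G_ge0 // subr_ge0 ltW.
rewrite big_bool /=; have [far|close] := leP eta (fdiv f Q s).
  by have := ler_wpM2l (_ : 0 <= 1 - eps) (G_nondecr Deta DQs far); lra.
by have := ler_wpM2l (ltW eps0) (near_Q s sd Ps Qs close); lra.
Qed.

Hypothesis G_gt0 : forall x, Gdom f x -> 0 < x -> 0 < G x.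

Lemma info_div : information_subadditive G f -> divergence_subadditive G f.
Proof.
move=> sub Y Z qY rY qZ rZ qYd rYd qZd rZd qrY qrZ.
pose P w := qY w.1 * qZ w.2; pose Q w := rY w.1 * rZ w.2.
have Pd : is_dist P := is_dist_prod qYd qZd; have Qd : is_dist Q := is_dist_prod rYd rZd.
have PQ : abscont P Q := abscont_prod qrY qrZ.
have DPQ := fdiv_Gdom f_convex f1 f_strict Pd Qd PQ.
set S := G (fdiv f qY rY) + G (fdiv f qZ rZ).
have S0 : 0 <= S by apply: addr_ge0; apply: G_ge0; exact: fdiv_Gdom.
rewrite -/P -/Q leNgt; apply/negP => SG.
pose c := (S + G (fdiv f P Q)) / 2.
have cG : c < G (fdiv f P Q) by rewrite /c; lra.
have [eta0 eta0_gt0 near_Q] := G_fdiv_gt_near Pd Qd PQ cG.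
have PQ_gt0 : 0 < fdiv f P Q.
  by rewrite lt0r DPQ.1 andbT; apply: contraTneq SG => ->; rewrite G0 -leNgt.
pose eta := Num.min eta0 (fdiv f P Q).
have eta_gt0 : 0 < eta by rewrite lt_min eta0_gt0.
have Deta : Gdom f eta.
  by split; [exact: ltW | apply: le_lt_trans DPQ.2; rewrite lee_fin ge_min lexx orbT].
have Geta := G_gt0 Deta eta_gt0.
(* Weight the switch so that an output law far from Q costs exactly eps * c. *)
pose eps := G eta / (G eta + c).
have c_gt0 : 0 < c by rewrite /c; lra.
have eps01 : 0 < eps < 1.
  by rewrite divr_gt0 ?addr_gt0 //= ltr_pdivrMr ?addr_gt0 // mul1r ltrDl.
have epsE : (1 - eps) * G eta = eps * c by rewrite /eps; field; rewrite gt_eqF ?addr_gt0.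
have := info_subadditive_switch sub eps01 qYd rYd qZd rZd.
have near_Q' s : is_dist s -> abscont P s -> abscont Q s -> fdiv f Q s < eta ->
    c <= G (fdiv f P s).
  move=> sd Ps Qs small; apply/ltW/near_Q => //.
  by apply: lt_le_trans small _; rewrite ge_min lexx.
have := Iinfo_bern_ge eps01 Pd Qd Deta epsE near_Q'.
have := Iinfo_bern_le eps01 qYd rYd qrY; have := Iinfo_bern_le eps01 qZd rZd qrZ.
have : eps * S < eps * c by rewrite ltr_pM2l // /c; lra.
by rewrite /S; lra.
Qed.

End Subadditivity.

Theorem theorem1 (R : realType) (f G : R -> R) :
  convex_nonneg f -> f 1 = 0 -> strictly_convex_at1 f ->
  {within Gdom f, continuous G} ->
  (forall x y, Gdom f x -> Gdom f y -> x <= y -> G x <= G y) ->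
  (forall x, Gdom f x -> 0 <= G x) ->
  G 0 = 0 ->
  (forall x, Gdom f x -> 0 < x -> 0 < G x) ->
  (divergence_subadditive G f <-> information_subadditive G f).
Proof.
move=> f_convex f1 f_strict G_cont G_nondecr G_ge0 G0 G_gt0; split.
  exact: div_info.
exact: info_div.
Qed.
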